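(* Let $\Gamma$ be a relational structure with domain $\mathbb{Q}.\mathbb{Z}$ whose relations are first-order definable in $(\mathbb{Q}.\mathbb{Z};\mathrm{suc})$ and which contains $\mathrm{suc}$ among its relations. The following are equivalent: (1) every reduced DNF formula defining a relation of $\Gamma$ over $(\mathbb{Q}.\mathbb{Z};\mathrm{suc})$ is positive; (2) $\Gamma$ has an endomorphism $e$ and elements $a,b$ lying in different copies of $\mathbb{Z}$ such that $e(a),e(b)$ lie in the same copy of $\mathbb{Z}$; (3) $\Gamma$ does not primitive positively define a non-trivial binary relation with infinite distance degree.
   Context: $\mathbb{Q}.\mathbb{Z}=\mathbb{Q}\times\mathbb{Z}$ with lexicographic order; its copies of $\mathbb{Z}$ are the sets $\{a\}\times\mathbb{Z}$; $(a,z)+k=(a,z+k)$. $\mathrm{suc}^p=\{(x,x+p)\}$ for $p\in\mathbb{Z}$ and $\mathrm{suc}=\mathrm{suc}^1$. Relations first-order definable in $(\mathbb{Q}.\mathbb{Z};\mathrm{suc})$ have quantifier-free definitions using literals $\mathrm{suc}^p(x,y)$ and their negations. A DNF formula over such literals is reduced if removing any literal or any disjunct yields a formula not equivalent to it over $(\mathbb{Q}.\mathbb{Z};\mathrm{suc})$, and positive if it contains no negated literals. A binary relation first-order definable in $(\mathbb{Q}.\mathbb{Z};\mathrm{suc})$ is trivial if it is primitive positive definable in $(\mathbb{Q}.\mathbb{Z};\mathrm{suc})$, non-trivial otherwise. Its distance degree is the supremum of $|x-y|$ over pairs $(x,y)$ in the relation with $x,y$ in the same copy of $\mathbb{Z}$;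 it is infinite if this supremum is $\infty$. *)

From HB Require Import structures.
From mathcomp Require Import all_boot all_order all_algebra.
Set Implicit Arguments. Unset Strict Implicit. Unset Printing Implicit Defensive.
Import Order.TTheory GRing.Theory Num.Theory.

(* The domain Q.Z = Q x Z; copies of Z are the fibres {a} x Z. *)
Definition QZ : Type := (rat * int)%type.

Definition sucp (p : int) (x y : QZ) : bool :=
  (x.1 == y.1) && (y.2 == (x.2 + p)%R).

Definition same_copy (x y : QZ) : Prop := x.1 = y.1.

Definition upd (v : nat -> QZ) (x : nat) (a : QZ) : nat -> QZ :=
  fun k => if k == x then a else v k.

Inductive fo : Type :=
| FSuc of nat & nat
| FEq of nat & nat
| FTrue
| FNot of fo
| FAnd of fo & fo
| FOr of fo & fo
| FEx of nat & fo
| FAll of nat & fo.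

Fixpoint fo_holds (v : nat -> QZ) (f : fo) : Prop :=
  match f with
  | FSuc i j => sucp 1 (v i) (v j)
  | FEq i j => v i = v j
  | FTrue => True
  | FNot g => ~ fo_holds v g
  | FAnd g h => fo_holds v g /\ fo_holds v h
  | FOr g h => fo_holds v g \/ fo_holds v h
  | FEx x g => exists a, fo_holds (upd v x a) g
  | FAll x g => forall a, fo_holds (upd v x a) g
  end.

(* An n-ary relation (a predicate on tuples represented as sequences) is
   first-order definable in (Q.Z; suc): some formula with free variables
   among x_0..x_{n-1} defines it (no parameters: the equivalence holds for
   every valuation). *)
Definition fo_definable (n : nat) (R : seq QZ -> Prop) : Prop :=
  exists f : fo, forall v : nat -> QZ, R (mkseq v n) <-> fo_holds v f.

Record structure := Structure {
  sym : Type;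
  arity : sym -> nat;
  relof : sym -> seq QZ -> Prop;
  relof_size : forall i s, relof i s -> size s = arity i
}.

Definition suc_rel (s : seq QZ) : Prop :=
  exists x y, s = [:: x; y] /\ sucp 1 x y.

Lemma suc_rel_size (i : unit) s : suc_rel s -> size s = 2.
Proof. by case=> x [y [-> _]]. Qed.

Definition QZsuc : structure :=
  @Structure unit (fun _ => 2) (fun _ => suc_rel) suc_rel_size.

Definition endomorphism (G : structure) (e : QZ -> QZ) : Prop :=
  forall (i : sym G) (s : seq QZ), relof i s -> relof i (map e s).

Inductive ppf (G : structure) : Type :=
| PRel of sym G & seq nat
| PEq of nat & nat
| PTrue
| PAnd of ppf G & ppf G
| PEx of nat & ppf G.

Fixpoint pp_holds (G : structure) (v : nat -> QZ) (f : ppf G) : Prop :=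
  match f with
  | PRel i xs => relof i (map v xs)
  | PEq i j => v i = v j
  | PTrue => True
  | PAnd g h => pp_holds v g /\ pp_holds v h
  | PEx x g => exists a, pp_holds (upd v x a) g
  end.

Definition pp_definable2 (G : structure) (R : QZ -> QZ -> Prop) : Prop :=
  exists f : ppf G, forall v : nat -> QZ, R (v 0%N) (v 1%N) <-> pp_holds v f.

Definition fo_definable2 (R : QZ -> QZ -> Prop) : Prop :=
  fo_definable 2 (fun s => R (nth (0, 0)%R s 0) (nth (0, 0)%R s 1)).

Definition trivial2 (R : QZ -> QZ -> Prop) : Prop := pp_definable2 QZsuc R.
Definition nontrivial2 (R : QZ -> QZ -> Prop) : Prop :=
  fo_definable2 R /\ ~ trivial2 R.

Definition infinite_distance_degree (R : QZ -> QZ -> Prop) : Prop :=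
  forall N : nat, exists x y : QZ,
    R x y /\ same_copy x y /\ (N < `|(y.2 - x.2)%R|)%N.

(* literal (i, j, p, b): suc^p(x_i, x_j) if b = true, its negation if false *)
Definition literal : Type := (nat * nat * int * bool)%type.
Definition clause : Type := seq literal.
Definition dnf : Type := seq clause.

Definition lit_holds (v : nat -> QZ) (l : literal) : bool :=
  let: (i, j, p, b) := l in sucp p (v i) (v j) == b.
Definition clause_holds (v : nat -> QZ) (c : clause) : bool :=
  all (lit_holds v) c.
Definition dnf_holds (v : nat -> QZ) (d : dnf) : bool :=
  has (clause_holds v) d.

Definition dnf_equiv (d1 d2 : dnf) : Prop :=
  forall v : nat -> QZ, dnf_holds v d1 = dnf_holds v d2.

Definition dnf_vars_lt (n : nat) (d : dnf) : bool :=
  all (fun c => all (fun l : literal =>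
         let: (i, j, _, _) := l in (i < n) && (j < n))%N c) d.

Definition dnf_defines (n : nat) (R : seq QZ -> Prop) (d : dnf) : Prop :=
  dnf_vars_lt n d /\ forall v : nat -> QZ, R (mkseq v n) <-> dnf_holds v d.

Definition del_nth {T : Type} (s : seq T) (k : nat) : seq T :=
  take k s ++ drop k.+1 s.

Definition del_lit (d : dnf) (k l : nat) : dnf :=
  set_nth [::] d k (del_nth (nth [::] d k) l).

Definition reduced (d : dnf) : Prop :=
  (forall k, (k < size d)%N -> ~ dnf_equiv (del_nth d k) d) /\
  (forall k l, (k < size d)%N -> (l < size (nth [::] d k))%N ->
     ~ dnf_equiv (del_lit d k l) d).

Definition positive (d : dnf) : bool :=
  all (fun c => all (fun l : literal => l.2) c) d.

From HB Require Import structures.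
From mathcomp Require Import all_boot all_order all_algebra.
From mathcomp Require Import zify ring lra.
From Stdlib Require Import Classical FunctionalExtensionality.
Import Order.TTheory GRing.Theory Num.Theory.
Set Implicit Arguments. Unset Strict Implicit. Unset Printing Implicit Defensive.
Local Open Scope ring_scope.

(* Truth of a first-order formula over (Q.Z; suc) only depends on which relations [suc^p]
   with [|p| <= N] hold among its free variables, for some radius [N]; hence every definable
   relation has a DNF definition, and any two maps which agree on these relations up to the
   radius are interchangeable inside a relation of Gamma.

   (1) => (2): collapsing all copies onto one preserves positive literals.

   (2) => every endomorphism [h] of (Q.Z; suc) is an endomorphism of Gamma: composing the
   merging endomorphism with isometries collapses the copies of a tuple onto a single copy, and
   placing them there with large gaps, separating exactly the copies which [h] separates,
   reproduces [h] up to the radius. This forces reduced DNFs to be positive: a negative literal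
   of a reduced DNF yields a non-tuple which becomes a tuple once a block of its coordinates is
   moved to a fresh copy, while folding that copy back is an endomorphism of (Q.Z; suc). It also
   forces a pp-definable binary relation of infinite distance degree to be full: by locality it
   contains a pair on two copies, which can be sent anywhere.

   not (2) => not (3): gluing copy 1 onto copy 0 breaks some tuple of Gamma; laying out its
   copy 1 from one point and its other copies from another gives a pp-definable relation which
   holds for points far apart on one copy, hence for points on distinct copies, but not for
   equal points. *)

(** * Locality of first-order formulas *)

Lemma sucpC p (x y : QZ) : sucp p x y = sucp (- p) y x.
Proof. by rewrite /sucp eq_sym; congr andb; apply/eqP/eqP; lia. Qed.

Lemma sucpxx p (x : QZ) : sucp p x x = (p == 0).
Proof. by rewrite /sucp eqxx; apply/eqP/eqP; lia. Qed.

Lemma sucp0 (x y : QZ) : sucp 0 x y = (x == y).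
Proof. by case: x y => [x1 x2] [y1 y2]; rewrite /sucp addr0 xpair_eqE [y2 == _]eq_sym. Qed.

Lemma sucp_shiftl p c (x y : QZ) : sucp p (x.1, x.2 + c) y = sucp (p + c) x y.
Proof. by rewrite /sucp /=; congr andb; apply/eqP/eqP; lia. Qed.

Lemma sucp_shift p c d (x y : QZ) :
  sucp p (x.1, x.2 + c) (y.1, y.2 + d) = sucp (p + c - d) x y.
Proof. by rewrite /sucp /=; congr andb; apply/eqP/eqP; lia. Qed.

Lemma sucpP p (x y : QZ) : sucp p x y <-> y = (x.1, x.2 + p).
Proof.
case: y => y1 y2; split; first by case/andP => /eqP /= <- /eqP /= ->.
by case=> -> ->; rewrite /sucp !eqxx.
Qed.

Lemma sucpD1 p (x z : QZ) : sucp (p + 1) x z <-> exists y, sucp p x y /\ sucp 1 y z.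
Proof.
rewrite sucpP; split => [->|[y [/sucpP -> /sucpP ->]]]; last by rewrite -addrA.
by exists (x.1, x.2 + p); rewrite !sucpP addrA.
Qed.

Definition sucp_agree (N : nat) (X : seq nat) (v w : nat -> QZ) :=
  forall i j, i \in X -> j \in X -> forall p : int, (absz p <= N)%N ->
    sucp p (v i) (v j) = sucp p (w i) (w j).

Lemma sucp_agree_sym N X v w : sucp_agree N X v w -> sucp_agree N X w v.
Proof. by move=> H i j Hi Hj p Hp; rewrite H. Qed.

Lemma sucp_agree_sub N N' X X' v w :
  (N' <= N)%N -> {subset X' <= X} -> sucp_agree N X v w -> sucp_agree N' X' v w.
Proof. by move=> HN HX H i j /HX Hi /HX Hj p Hp; apply: H => //; apply: leq_trans HN. Qed.

Lemma exists_fresh_rat (s : seq rat) : exists F : rat, F \notin s.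
Proof.
suff [F HF] : exists F : rat, forall x, x \in s -> x < F.
  by exists F; apply/negP => /HF; rewrite ltxx.
exists (\sum_(x <- s) `|x| + 1) => x Hx; rewrite (big_rem x Hx) /=.
have := ler_norm x; have : 0 <= \sum_(y <- rem x s) `|y| by apply: sumr_ge0.
lra.
Qed.

Lemma sucp_agree_upd N X x v w a b :
  sucp_agree N (x :: X) v w ->
  (forall j, j \in X -> j != x -> forall p, (absz p <= N)%N ->
     sucp p a (v j) = sucp p b (w j)) ->
  sucp_agree N (x :: X) (upd v x a) (upd w x b).
Proof.
move=> H key i j Hi Hj p Hp; rewrite /upd.
have inX k : k \in x :: X -> k != x -> k \in X by rewrite inE => /orP [/eqP ->|]; rewrite ?eqxx.
case: (eqVneq i x) => Hix; case: (eqVneq j x) => Hjx.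
- by rewrite !sucpxx.
- exact: key (inX j Hj Hjx) Hjx p Hp.
- by rewrite sucpC [RHS]sucpC; apply: key (inX i Hi Hix) Hix _ _; rewrite abszN.
- exact: H.
Qed.

(* Doubling the radius leaves room to place the new point either at distance at most N from an old
   point of the same copy, or on a fresh copy. *)
Lemma sucp_agree_ext N X x v w a :
  sucp_agree (N + N) (x :: X) v w -> exists b, sucp_agree N (x :: X) (upd v x a) (upd w x b).
Proof.
move=> H; have H' := sucp_agree_sub (leq_addr N N) (fun z (Hz : z \in x :: X) => Hz) H.
case: (classic (exists y, [/\ y \in X, y != x, (v y).1 = a.1 & (absz (a.2 - (v y).2) <= N)%N])).
- move=> [y [Hy Hyx Hc Hd]]; set r := a.2 - (v y).2.
  exists ((w y).1, (w y).2 + r); apply: sucp_agree_upd => // j Hj Hjx p Hp.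
  have -> : a = ((v y).1, (v y).2 + r) by case: a Hc {Hd} @r => a1 a2 /= ->; congr pair; ring.
  by rewrite !sucp_shiftl; apply: H; rewrite ?inE ?Hy ?Hj ?orbT //; lia.
- move=> Hno; have [F HF] := exists_fresh_rat [seq (w y).1 | y <- X].
  exists (F, 0); apply: sucp_agree_upd => // j Hj Hjx p Hp.
  transitivity false.
    apply/negbTE/negP => /andP [/eqP E1 /eqP E2]; apply: Hno.
    by exists j; split => //; rewrite E2; lia.
  by rewrite /sucp /=; case: eqP => // E; move: HF; rewrite E (map_f (fun y => (w y).1) Hj).
Qed.

Fixpoint fvars (f : fo) : seq nat :=
  match f with
  | FSuc i j | FEq i j => [:: i; j]
  | FTrue => [::]
  | FNot g => fvars g
  | FAnd g h | FOr g h => fvars g ++ fvars h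
  | FEx x g | FAll x g => x :: fvars g
  end.

Lemma fo_holds_local f : exists N, forall v w, sucp_agree N (fvars f) v w ->
  (fo_holds v f <-> fo_holds w f).
Proof.
have agree_cat X Y N1 N2 v w : sucp_agree (maxn N1 N2) (X ++ Y) v w ->
    sucp_agree N1 X v w /\ sucp_agree N2 Y v w.
  by move=> H; split; apply: sucp_agree_sub H;
    rewrite ?leq_maxl ?leq_maxr // => z Hz; rewrite mem_cat Hz ?orbT.
have agree_cons x X N v w a : sucp_agree (N + N) (x :: X) v w ->
    exists b, sucp_agree N X (upd v x a) (upd w x b).
  move=> /(sucp_agree_ext a) [b Hb]; exists b.
  by apply: sucp_agree_sub Hb => // z Hz; rewrite inE Hz orbT.
elim: f => /=.
- move=> i j; exists 1%N => v w H; by rewrite H ?inE ?eqxx ?orbT.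
- move=> i j; exists 0%N => v w H.
  have := H i j; rewrite !inE !eqxx orbT /= => /(_ isT isT 0 (leqnn _)).
  by rewrite !sucp0 => E; split => /eqP; [rewrite E | rewrite -E] => /eqP.
- by exists 0%N.
- by move=> g [N IH]; exists N => v w /IH ->.
- move=> g [N1 IH1] h [N2 IH2]; exists (maxn N1 N2) => v w /agree_cat [/IH1 -> /IH2 ->] //.
- move=> g [N1 IH1] h [N2 IH2]; exists (maxn N1 N2) => v w /agree_cat [/IH1 -> /IH2 ->] //.
- move=> x g [N IH]; exists (N + N)%N => v w H; split.
  + by move=> [a Ha]; have [b /IH Hb] := agree_cons _ _ _ _ _ a H; exists b; apply/Hb.
  + move=> [b Hb]; have [a /IH Ha] := agree_cons _ _ _ _ _ b (sucp_agree_sym H).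
    by exists a; apply/Ha.
- move=> x g [N IH]; exists (N + N)%N => v w H; split => Hall c.
  + by have [a /IH Ha] := agree_cons _ _ _ _ _ c (sucp_agree_sym H); apply/Ha.
  + by have [b /IH Hb] := agree_cons _ _ _ _ _ c H; apply/Hb.
Qed.

Definition local_rel n (P : seq QZ -> Prop) :=
  exists N, forall v w, sucp_agree N (iota 0 n) v w -> P (mkseq v n) -> P (mkseq w n).

(* Coordinates beyond [n] are redirected to [x_0], so that the free variables of a defining formula
   only see [x_0..x_{n-1}]. *)
Definition clamp n (v : nat -> QZ) (k : nat) := v (if (k < n)%N then k else 0%N).

Lemma mkseq_clamp n v : mkseq (clamp n v) n = mkseq v n.
Proof. by apply/eq_in_map => k; rewrite mem_iota /clamp => /= ->. Qed.

Lemma fo_definable_local n P : fo_definable n P -> local_rel n P.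
Proof.
move=> [f Hf]; have [N HN] := fo_holds_local f; exists N => v w H.
case: n H Hf => [|n] H Hf //.
rewrite -(mkseq_clamp n.+1 v) -(mkseq_clamp n.+1 w) !Hf; apply: (proj1 (HN _ _ _)) => i j _ _ p Hp.
by rewrite /clamp; apply: H; rewrite // mem_iota; case: ifP.
Qed.

(** * Disjunctive normal forms *)

Lemma exists_filter (T : eqType) (Q : T -> Prop) (s : seq T) :
  exists s' : seq T, forall x, x \in s' <-> x \in s /\ Q x.
Proof.
elim: s => [|y s [s' IH]]; first by exists [::] => x; split => // [[]].
case: (classic (Q y)) => Hy; [exists (y :: s') | exists s'] => x;
  rewrite !inE; move: (IH x); case: eqP => [->|_] /=; intuition.
Qed.

Fixpoint bitseqs (m : nat) : seq bitseq :=
  if m is m'.+1 then [seq b :: bs | b <- [:: true; false], bs <- bitseqs m'] else [:: [::]].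

Lemma mem_bitseqs bs : bs \in bitseqs (size bs).
Proof.
elim: bs => [|b bs IH] //=; rewrite mem_cat cats0.
by case: b; rewrite (map_f _ IH) ?orbT.
Qed.

Definition int_range (N : nat) : seq int := [seq k%:Z - N%:Z | k <- iota 0 (N + N).+1].

Lemma mem_int_range N (p : int) : (absz p <= N)%N -> p \in int_range N.
Proof. by move=> Hp; apply/mapP; exists (absz (p + N%:Z)); [rewrite mem_iota |]; lia. Qed.

Definition atoms (n N : nat) : seq (nat * nat * int) :=
  [seq (ij, p) | ij <- [seq (i, j) | i <- iota 0 n, j <- iota 0 n], p <- int_range N].

Lemma atomsP n N i j p : (i < n)%N -> (j < n)%N -> (absz p <= N)%N -> (i, j, p) \in atoms n N.
Proof.
move=> Hi Hj Hp; apply: (allpairs_f (fun ij p => (ij, p))); last exact: mem_int_range.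
by apply: (allpairs_f (fun i j => (i, j))); rewrite mem_iota.
Qed.

Lemma atoms_lt n N a : a \in atoms n N -> (a.1.1 < n)%N /\ (a.1.2 < n)%N.
Proof.
case/allpairsP => [[ij p] [/allpairsP [[i j] [Hi Hj ->]] _ ->]] /=.
by move: Hi Hj; rewrite !mem_iota.
Qed.

Definition signed_clause (A : seq (nat * nat * int)) (bs : bitseq) : clause :=
  [seq (ab.1.1.1, ab.1.1.2, ab.1.2, ab.2) | ab <- zip A bs].

Definition atom_holds (v : nat -> QZ) (a : nat * nat * int) := sucp a.2 (v a.1.1) (v a.1.2).

Definition type_clause (A : seq (nat * nat * int)) (v : nat -> QZ) : clause :=
  signed_clause A (map (atom_holds v) A).

Lemma type_clauseE A v :
  type_clause A v = [seq (a.1.1, a.1.2, a.2, atom_holds v a) | a <- A].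
Proof. by rewrite /type_clause /signed_clause; elim: A => //= a A ->. Qed.

Lemma clause_holds_type A v w :
  clause_holds w (type_clause A v) = all (fun a => atom_holds w a == atom_holds v a) A.
Proof. by rewrite type_clauseE /clause_holds all_map. Qed.

(* A local relation is the disjunction of the complete atomic types of its tuples; there are
   finitely many. *)
Lemma local_dnf_definable n P : local_rel n P -> exists d, dnf_defines n P d.
Proof.
move=> [N HN]; pose A := atoms n N.
have [d Hd] := exists_filter (fun c => exists v, P (mkseq v n) /\ c = type_clause A v)
  [seq signed_clause A bs | bs <- bitseqs (size A)].
exists d; split.
  apply/allP => c /Hd [_ [v [_ ->]]]; apply/allP => l; rewrite type_clauseE.
  by case/mapP => a /atoms_lt [Ha1 Ha2] -> /=; rewrite Ha1 Ha2.
move=> w; split => [Pw|/hasP [c /Hd [_ [v [Pv ->]]]]].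
  apply/hasP; exists (type_clause A w); last by rewrite clause_holds_type; apply/allP.
  apply/Hd; split; last by exists w.
  by apply: map_f; rewrite -(size_map (atom_holds w)) mem_bitseqs.
rewrite clause_holds_type => /allP H; apply: (HN v) => // i j; rewrite !mem_iota /= => Hi Hj p Hp.
by apply/esym/eqP; apply: (H (i, j, p)); apply: atomsP.
Qed.

Lemma take_nth_drop (T : Type) (x0 : T) (s : seq T) k : (k < size s)%N ->
  s = take k s ++ nth x0 s k :: drop k.+1 s.
Proof. by move=> Hk; rewrite -drop_nth // cat_take_drop. Qed.

Lemma mem_del_nth (T : eqType) (s : seq T) k : {subset del_nth s k <= s}.
Proof. by move=> x; rewrite mem_cat => /orP [/mem_take|/mem_drop]. Qed.

Lemma del_litE (d : dnf) k l : (k < size d)%N ->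
  del_lit d k l = take k d ++ del_nth (nth [::] d k) l :: drop k.+1 d.
Proof. by move=> Hk; rewrite /del_lit set_nthE Hk. Qed.

Lemma has_del_nth (T : Type) (x0 : T) (a : pred T) s k : (k < size s)%N ->
  has a s = a (nth x0 s k) || has a (del_nth s k).
Proof. by move=> Hk; rewrite {1}(take_nth_drop x0 Hk) has_cat /= has_cat orbCA. Qed.

Lemma all_del_nth (T : Type) (x0 : T) (a : pred T) s k : (k < size s)%N ->
  all a s = a (nth x0 s k) && all a (del_nth s k).
Proof. by move=> Hk; rewrite {1}(take_nth_drop x0 Hk) all_cat /= all_cat andbCA. Qed.

Lemma dnf_holds_del_lit v (d : dnf) k l : (k < size d)%N ->
  dnf_holds v (del_lit d k l) = clause_holds v (del_nth (nth [::] d k) l) || dnf_holds v (del_nth d k).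
Proof. by move=> Hk; rewrite /dnf_holds del_litE // has_cat /= has_cat orbCA. Qed.

Definition dnf_size (d : dnf) : nat := sumn [seq (size c).+1 | c <- d].

Lemma dnf_size_del_nth (d : dnf) k : (k < size d)%N -> (dnf_size (del_nth d k) < dnf_size d)%N.
Proof.
move=> Hk; rewrite [in dnf_size d](take_nth_drop [::] Hk) /dnf_size /del_nth !map_cat !sumn_cat /=.
by rewrite ltn_add2l addSn ltnS leq_addl.
Qed.

Lemma size_del_nth (T : Type) (s : seq T) k : (k < size s)%N -> size (del_nth s k) = (size s).-1.
Proof. by move=> Hk; rewrite /del_nth size_cat size_take size_drop Hk; lia. Qed.

Lemma dnf_size_del_lit (d : dnf) k l : (k < size d)%N -> (l < size (nth [::] d k))%N ->
  (dnf_size (del_lit d k l) < dnf_size d)%N.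
Proof.
move=> Hk Hl; rewrite del_litE // [in dnf_size d](take_nth_drop [::] Hk) /dnf_size !map_cat !sumn_cat /=.
by rewrite ltn_add2l ltn_add2r size_del_nth // prednK // (leq_ltn_trans _ Hl).
Qed.

Lemma dnf_vars_lt_sub n (d d' : dnf) :
  (forall c', c' \in d' -> exists2 c, c \in d & {subset c' <= c}) ->
  dnf_vars_lt n d -> dnf_vars_lt n d'.
Proof.
move=> Hsub /allP Hd; apply/allP => c' /Hsub [c /Hd /allP Hc Hc'c].
by apply/allP => l /Hc'c /Hc.
Qed.

Lemma dnf_vars_lt_del_nth n (d : dnf) k : dnf_vars_lt n d -> dnf_vars_lt n (del_nth d k).
Proof. by apply: dnf_vars_lt_sub => c Hc; exists c; [exact: mem_del_nth Hc|]. Qed.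

Lemma dnf_vars_lt_del_lit n (d : dnf) k l : (k < size d)%N ->
  dnf_vars_lt n d -> dnf_vars_lt n (del_lit d k l).
Proof.
move=> Hk; apply: dnf_vars_lt_sub => c'; rewrite del_litE // mem_cat inE.
case/or3P => [Hc'|/eqP ->|Hc']; [exists c'|exists (nth [::] d k)|exists c'] => //.
- by rewrite -[d](cat_take_drop k) mem_cat Hc'.
- by rewrite mem_nth.
- exact: mem_del_nth.
- by rewrite -[d](cat_take_drop k.+1) mem_cat Hc' orbT.
Qed.

Lemma reduced_dnf_exists n P d : dnf_defines n P d -> exists d', dnf_defines n P d' /\ reduced d'.
Proof.
move: {2}(dnf_size d) (leqnn (dnf_size d)) => m; elim: m d => [|m IH] d Hm [Hv Hdef].
  case: d Hm Hv Hdef => [|c d] // _ Hv Hdef.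
  by exists [::]; split; [split | split => [k|k l]; rewrite /= ltn0].
have equiv_defines d' : dnf_equiv d' d -> dnf_vars_lt n d' -> dnf_defines n P d'.
  by move=> E Hv'; split => // v; rewrite E.
case: (classic (reduced d)) => Hred; first by exists d.
case: (classic (exists2 k, (k < size d)%N & dnf_equiv (del_nth d k) d)) => [[k Hk E]|Hno1].
  apply: (IH (del_nth d k)); first by rewrite -ltnS (leq_trans (dnf_size_del_nth Hk)).
  exact: equiv_defines E (dnf_vars_lt_del_nth k Hv).
case: (classic (exists k l, [/\ (k < size d)%N, (l < size (nth [::] d k))%N &
                   dnf_equiv (del_lit d k l) d])) => [[k [l [Hk Hl E]]]|Hno2].
  apply: (IH (del_lit d k l)); first by rewrite -ltnS (leq_trans (dnf_size_del_lit Hk Hl)).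
  exact: equiv_defines E (dnf_vars_lt_del_lit l Hk Hv).
by case: Hred; split => [k Hk E|k l Hk Hl E]; [apply: Hno1; exists k | apply: Hno2; exists k, l].
Qed.

(* [x_i + k = x_j] spelled out with the fresh variables [base, ..., base + k - 1]. *)
Fixpoint fo_sucn (k i j base : nat) : fo :=
  if k is k'.+1 then FEx (base + k') (FAnd (fo_sucn k' i (base + k') base) (FSuc (base + k') j))
  else FEq i j.

Lemma fo_sucn_sem k i j base v : (i < base)%N -> (j < base \/ base + k <= j)%N ->
  (fo_holds v (fo_sucn k i j base) <-> sucp k%:Z (v i) (v j)).
Proof.
elim: k j v => [|k IH] j v Hi Hj /=; first by rewrite sucp0; split => [->|/eqP].
have -> : k.+1%:Z = k%:Z + 1 by lia.
have [Hik Hjk] : i != base + k /\ j != base + k by rewrite !neq_ltn; lia.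
have Hchain a : fo_holds (upd v (base + k) a) (fo_sucn k i (base + k) base) <-> sucp k (v i) a.
  by rewrite IH //; [rewrite /upd (negbTE Hik) eqxx | right].
have Hlast a : sucp 1 (upd v (base + k) a (base + k)) (upd v (base + k) a j) = sucp 1 a (v j).
  by rewrite /upd eqxx (negbTE Hjk).
by rewrite sucpD1; split => [] [a]; rewrite ?Hchain ?Hlast => H; exists a; rewrite ?Hchain ?Hlast.
Qed.

Definition fo_sucp (p : int) i j base : fo :=
  if 0 <= p then fo_sucn (absz p) i j base else fo_sucn (absz p) j i base.

Lemma fo_sucp_sem p i j base v : (i < base)%N -> (j < base)%N ->
  (fo_holds v (fo_sucp p i j base) <-> sucp p (v i) (v j)).
Proof.
move=> Hi Hj; rewrite /fo_sucp; case: ifP => Hp.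
- by rewrite fo_sucn_sem //; [have -> : (absz p)%:Z = p by lia | left].
- rewrite fo_sucn_sem //; last by left.
  by rewrite [sucp p _ _]sucpC; have -> : - p = (absz p)%:Z by lia.
Qed.

Definition lit_fo base (l : literal) : fo :=
  let: (i, j, p, b) := l in if b then fo_sucp p i j base else FNot (fo_sucp p i j base).

Definition dnf_fo base (d : dnf) : fo :=
  foldr (fun c f => FOr (foldr (fun l g => FAnd (lit_fo base l) g) FTrue c) f) (FNot FTrue) d.

Lemma dnf_fo_sem n d v : dnf_vars_lt n d -> (fo_holds v (dnf_fo n d) <-> dnf_holds v d).
Proof.
elim: d => [|c d IH] /=; first by split => // H; apply: H.
case/andP => Hc /IH ->; rewrite /dnf_holds /= -/(dnf_holds v d).
suff -> : fo_holds v (foldr (fun l g => FAnd (lit_fo n l) g) FTrue c) <-> clause_holds v c.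
  by split => [[]->|/orP []]; rewrite ?orbT; auto.
elim: c Hc => [|[[[i j] p] b] c IHc] //= /andP [/andP [Hi Hj] /IHc ->].
rewrite /clause_holds /= -/(clause_holds v c).
by case: b => /=; rewrite fo_sucp_sem //; case: (sucp _ _ _) => /=; intuition.
Qed.

Lemma local_fo_definable n P : local_rel n P -> fo_definable n P.
Proof.
move=> /local_dnf_definable [d [Hv Hdef]]; exists (dnf_fo n d) => v.
by rewrite Hdef dnf_fo_sem.
Qed.

(** * Endomorphisms *)

Definition suc_endo (h : QZ -> QZ) := forall x y, sucp 1 x y -> sucp 1 (h x) (h y).

Lemma suc_endo_shift h : suc_endo h ->
  forall x (n : nat), h (x.1, x.2 + n%:Z) = ((h x).1, (h x).2 + n%:Z).
Proof.
move=> Hh x; elim=> [|n IH]; first by rewrite !addr0 -!surjective_pairing.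
have /Hh /sucpP -> : sucp 1 (x.1, x.2 + n%:Z) (x.1, x.2 + n.+1%:Z) by apply/sucpP; congr pair => /=; lia.
by rewrite IH /=; congr pair; lia.
Qed.

Lemma suc_endo_translate h : suc_endo h ->
  forall q z, h (q, z) = ((h (q, 0)).1, z + (h (q, 0)).2).
Proof.
move=> Hh q [] n; first by rewrite (suc_endo_shift Hh (q, 0) n) /= addrC.
rewrite NegzE; have := suc_endo_shift Hh (q, - n.+1%:Z) n.+1; rewrite /= addNr => ->.
by case: (h _) => a b /=; congr pair; ring.
Qed.

Definition sucp_isometry (f : QZ -> QZ) := forall x y p, sucp p (f x) (f y) = sucp p x y.

Lemma copywise_isometry (phi : rat -> rat) (sh : rat -> int) :
  injective phi -> sucp_isometry (fun x => (phi x.1, x.2 + sh x.1)).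
Proof.
move=> Hphi x y p; rewrite /sucp /= (inj_eq Hphi).
by case: (eqVneq x.1 y.1) => [->|] //=; apply/eqP/eqP; lia.
Qed.

Definition swap (T : eqType) (u v x : T) := if x == u then v else if x == v then u else x.

Lemma swapK (T : eqType) (u v : T) : involutive (swap u v).
Proof.
move=> x; rewrite /swap.
case: (eqVneq x u) => [->|Hxu]; first by rewrite eqxx; case: eqP.
case: (eqVneq x v) => [->|Hxv]; first by rewrite eqxx.
by rewrite (negbTE Hxu) (negbTE Hxv).
Qed.

Lemma exists_inj_two (T : eqType) (c c' a b : T) : c != c' -> a != b ->
  exists phi : T -> T, [/\ injective phi, phi c = a & phi c' = b].
Proof.
move=> Hc Hab; pose s1 := swap c a; pose s2 := swap (s1 c') b.
have s1c : s1 c = a by rewrite /s1 /swap eqxx.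
have s1c' : s1 c' != a by rewrite -s1c (inj_eq (inv_inj (swapK c a))) eq_sym.
exists (s2 \o s1); split; first by apply: inj_comp; apply: inv_inj; apply: swapK.
- by rewrite /= s1c /s2 /swap eq_sym (negbTE s1c') (negbTE Hab).
- by rewrite /= /s2 /swap eqxx.
Qed.

Definition sucp_agree_on (N : nat) (s : seq QZ) (f g : QZ -> QZ) :=
  {in s &, forall u w p, (absz p <= N)%N -> sucp p (f u) (f w) = sucp p (g u) (g w)}.

Lemma sucp_agree_on_sym N s f g : sucp_agree_on N s f g -> sucp_agree_on N s g f.
Proof. by move=> H u w Hu Hw p Hp; rewrite H. Qed.

(* Place the points of [s] on the single copy [c], separating the groups of [J] by gaps wider than
   [N]: copies of [T]-images then correspond to groups. *)
Definition spread (B N : nat) (c : rat) (J : QZ -> nat) (T : QZ -> QZ) (u : QZ) : QZ :=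
  (c, ((B + B + N).+1 * J u)%N%:Z + (T u).2).

Lemma sucp_agree_spread (s : seq QZ) (B N : nat) (c : rat) (J : QZ -> nat) (T : QZ -> QZ) :
  {in s, forall u, absz (T u).2 <= B}%N ->
  {in s &, forall u w, (J u == J w) = ((T u).1 == (T w).1)} ->
  sucp_agree_on N s (spread B N c J T) T.
Proof.
move=> HB HJ u w Hu Hw p Hp; rewrite /spread /sucp /= eqxx -HJ //=.
case: (eqVneq (J u) (J w)) => [->|E]; first by apply/eqP/eqP; lia.
have Bu := HB u Hu; have Bw := HB w Hw; apply/negbTE/eqP => Heq.
have gap (K L : nat) : (K < L)%N -> ((B + B + N).+1 + (B + B + N).+1 * K <= (B + B + N).+1 * L)%N.
  by move=> HKL; rewrite -mulnS leq_mul2l HKL orbT.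
have [lt|gt|eq] := ltngtP (J u) (J w); last by rewrite eq eqxx in E.
all: move: Heq (gap _ _ lt) || move: Heq (gap _ _ gt).
all: move: ((B + B + N).+1 * J u)%N ((B + B + N).+1 * J w)%N => Pu Pw; lia.
Qed.

Lemma map_mkseq_nth (f : QZ -> QZ) (s : seq QZ) n :
  size s = n -> map f s = mkseq (f \o nth (0, 0) s) n.
Proof. by move=> <-; rewrite /mkseq map_comp -/(mkseq _ _) mkseq_nth. Qed.

Definition suc_endos_preserve (G : structure) := forall h, suc_endo h -> endomorphism G h.

Section Endomorphisms.
Variable G : structure.
Hypothesis Hfo : forall i : sym G, fo_definable (arity i) (relof i).

Lemma relof_local (i : sym G) : exists N, forall s f g,
  sucp_agree_on N s f g -> relof i (map f s) -> relof i (map g s).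
Proof.
have [N HN] := fo_definable_local (Hfo i); exists N => s f g H Hf.
have Hsize : size s = arity i by rewrite -(relof_size Hf) size_map.
move: Hf; rewrite !(map_mkseq_nth _ Hsize); apply: HN => k l; rewrite !mem_iota /= -Hsize => Hk Hl p Hp.
by apply: H; rewrite ?mem_nth.
Qed.

Lemma isometry_endomorphism pi : sucp_isometry pi -> endomorphism G pi.
Proof.
move=> Hpi i s; rewrite -{1}(map_id s); have [N HN] := relof_local i.
by apply: HN => u w _ _ p _; rewrite Hpi.
Qed.

Lemma endomorphism_comp e g : endomorphism G e -> endomorphism G g -> endomorphism G (e \o g).
Proof. by move=> He Hg i s Hs; rewrite map_comp; apply/He/Hg. Qed.

Hypothesis Hsuc : exists i : sym G, forall s, relof i s <-> suc_rel s.

Lemma endomorphism_suc_endo e : endomorphism G e -> suc_endo e.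
Proof.
move=> He x y Hxy; have [i Hi] := Hsuc.
have /He : relof i [:: x; y] by apply/Hi; exists x, y.
by move=> /Hi [a [b [[-> ->] H]]].
Qed.

Section MergingEndo.
Variable e : QZ -> QZ.
Hypothesis He : endomorphism G e.
Variables a b : rat.
Hypothesis Hab : a != b.
Hypothesis Heab : (e (a, 0)).1 = (e (b, 0)).1.

Lemma merge_copies (Qs : seq rat) :
  exists g c, endomorphism G g /\ {in Qs, forall q, (g (q, 0)).1 = c}.
Proof.
have Hes := endomorphism_suc_endo He.
elim: Qs => [|q Qs [g [c [Hg HQs]]]]; first by exists id, 0; split => // i s; rewrite map_id.
have [Hc|Hc] := eqVneq c (g (q, 0)).1.
  by exists g, c; split => // q'; rewrite inE => /orP [/eqP ->|/HQs].
have [phi [Hphi Ec Ec']] := exists_inj_two Hc Hab.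
(* An isometry sends the merged copy to [a] and the new one to [b]; then [e] merges them. *)
have Hpi := isometry_endomorphism (copywise_isometry (fun=> 0) Hphi).
exists (e \o ((fun x => (phi x.1, x.2 + 0)) \o g)), (e (a, 0)).1.
split; first by apply: endomorphism_comp He (endomorphism_comp Hpi Hg).
move=> q'; rewrite inE /= => /orP [/eqP ->|/HQs Eq'].
  by rewrite Ec' (suc_endo_translate Hes b) /= Heab.
by rewrite Eq' Ec (suc_endo_translate Hes a).
Qed.

Lemma collapse_copies (Qs : seq rat) (delta : rat -> int) :
  exists g c, endomorphism G g /\ {in Qs, forall q z, g (q, z) = (c, z + delta q)}.
Proof.
have [g [c [Hg HQs]]] := merge_copies Qs.
pose sh q := delta q - (g (q, 0)).2.
have Hpre := isometry_endomorphism (copywise_isometry sh (@inj_id rat)).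
exists (g \o (fun x => (x.1, x.2 + sh x.1))), c; split; first exact: endomorphism_comp Hg Hpre.
move=> q Hq z; rewrite /= (suc_endo_translate (endomorphism_suc_endo Hg)) HQs //.
by rewrite /sh; congr pair; ring.
Qed.

Lemma suc_endo_endomorphism h : suc_endo h -> endomorphism G h.
Proof.
move=> Hh i s Hs; have [N HN] := relof_local i.
(* Collapse the copies of [s] onto one copy, with large gaps between the groups of copies
   which [h] sends to distinct copies. *)
pose Cs := [seq (h u).1 | u <- s].
pose J u := index (h u).1 Cs.
pose B := (\sum_(u <- s) absz (h u).2)%N.
pose delta q := (h (q, 0%:Z)).2 + ((B + B + N).+1 * index (h (q, 0%:Z)).1 Cs)%N%:Z.
have [g [c [Hg Hgs]]] := collapse_copies [seq u.1 | u <- s] delta.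
have Egs : map g s = map (spread B N c J h) s.
  apply/eq_in_map => -[q z] Hu; rewrite Hgs ?(map_f fst Hu) // /spread /J /delta.
  by rewrite (suc_endo_translate Hh q z) /=; congr pair; ring.
have := Hg i s Hs; rewrite Egs.
apply: HN; apply: sucp_agree_spread => [u Hu|u w Hu Hw].
  by rewrite /B (big_rem u Hu) /= leq_addr.
by rewrite /J (inj_in_eq (@index_inj _ 0 Cs)) // (map_f (fun u => (h u).1)).
Qed.

End MergingEndo.

Definition merges_copies (e : QZ -> QZ) :=
  exists a b : QZ, ~ same_copy a b /\ same_copy (e a) (e b).

Lemma merging_endo_suc_endos e : endomorphism G e -> merges_copies e -> suc_endos_preserve G.
Proof.
move=> He [[a1 a2] [[b1 b2] [/eqP Hab Heab]]].
have Hes := endomorphism_suc_endo He.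
apply: (suc_endo_endomorphism He Hab).
by move: Heab; rewrite /same_copy (suc_endo_translate Hes a1) (suc_endo_translate Hes b1).
Qed.

End Endomorphisms.

(** * Positivity of reduced definitions *)

Section SplitBlock.
Variables (n jj : nat) (t u : nat -> QZ) (F : rat).
Hypothesis HF : forall k, (k < n)%N -> (t k).1 != F.

(* The coordinates which sit on the copy of [t jj] exactly as they sit relative to [u jj] in [u];
   they are moved to the fresh copy [F]. *)
Definition in_block k := [&& (t k).1 == (t jj).1, (u k).1 == (u jj).1 &
                            (u k).2 - (u jj).2 == (t k).2 - (t jj).2].

Definition split_block k : QZ := if in_block k then (F, (t k).2) else t k.

Definition unsplit (x : QZ) : QZ := if x.1 == F then ((t jj).1, x.2) else x.

Lemma in_block_sucp a b q : sucp q (t a) (t b) -> sucp q (u a) (u b) -> in_block a = in_block b.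
Proof.
move=> /andP [/eqP Et1 /eqP Et2] /andP [/eqP Eu1 /eqP Eu2].
rewrite /in_block Et1 Eu1 Et2 Eu2; congr [&& _, _ & _].
by apply/eqP/eqP; lia.
Qed.

Lemma lit_holds_split_block a b q bb : (a < n)%N -> (b < n)%N ->
  lit_holds t (a, b, q, bb) -> lit_holds u (a, b, q, bb) -> lit_holds split_block (a, b, q, bb).
Proof.
move=> Ha Hb /eqP Ht /eqP Hu; apply/eqP; rewrite /split_block.
case Ea: (in_block a); case Eb: (in_block b) => //.
- by case/and3P: Ea => /eqP Ea _ _; case/and3P: Eb => /eqP Eb _ _; rewrite -Ht /sucp /= Ea Eb !eqxx.
- rewrite /sucp /= eq_sym (negbTE (HF Hb)) /=; case: bb Ht Hu => // Ht Hu.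
  by move: (in_block_sucp Ht Hu); rewrite Ea Eb.
- rewrite /sucp /= (negbTE (HF Ha)) /=; case: bb Ht Hu => // Ht Hu.
  by move: (in_block_sucp Ht Hu); rewrite Ea Eb.
Qed.

Lemma split_block_sucp ii p : (ii < n)%N ->
  sucp p (t ii) (t jj) -> ~~ sucp p (u ii) (u jj) -> ~~ sucp p (split_block ii) (split_block jj).
Proof.
move=> Hii /andP [_ /eqP Et] Hu; rewrite /split_block.
have -> : in_block jj by rewrite /in_block !subrr !eqxx.
have -> : in_block ii = false.
  apply/and3P => [[/eqP E1 /eqP E2 /eqP E3]]; move: Hu; rewrite /sucp E2 eqxx /=.
  by move/eqP; apply; lia.
by rewrite /sucp /= (negbTE (HF Hii)).
Qed.

Lemma suc_endo_unsplit : suc_endo unsplit.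
Proof.
move=> x y /andP [/eqP E1 /eqP E2]; rewrite /unsplit E1.
by case: (y.1 == F); rewrite /sucp /= ?E1 E2 !eqxx.
Qed.

Lemma unsplitK k : (k < n)%N -> unsplit (split_block k) = t k.
Proof.
move=> Hk; rewrite /split_block /unsplit; case E: (in_block k) => /=; last by rewrite (negbTE (HF Hk)).
by case/and3P: E => /eqP <- _ _; rewrite eqxx -surjective_pairing.
Qed.

Lemma clause_holds_split_block (c : clause) ii p :
  all (fun l : literal => let: (a, b, _, _) := l in (a < n) && (b < n))%N c ->
  (ii, jj, p, false) \in c -> clause_holds u c ->
  clause_holds t (del_nth c (index (ii, jj, p, false) c)) -> sucp p (t ii) (t jj) ->
  clause_holds split_block c.
Proof.
set lit := (ii, jj, p, false) => Hvars Hlit Hu Ht Htp.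
have vars_lt a b q bb : (a, b, q, bb) \in c -> (a < n)%N /\ (b < n)%N.
  by move=> /(allP Hvars) /andP.
rewrite /clause_holds (all_del_nth lit _ (_ : index lit c < size c)%N) ?index_mem ?nth_index //.
apply/andP; split.
  rewrite /lit /lit_holds eqbF_neg; apply: split_block_sucp (proj1 (vars_lt _ _ _ _ Hlit)) Htp _.
  by move: (allP Hu _ Hlit); rewrite /lit /lit_holds eqbF_neg.
apply/allP => -[[[a b] q] bb] Hm; have [Ha Hb] := vars_lt _ _ _ _ (mem_del_nth Hm).
exact: lit_holds_split_block Ha Hb (allP Ht _ Hm) (allP Hu _ (mem_del_nth Hm)).
Qed.

End SplitBlock.

(* Reducedness: the clause can be satisfied (else drop it), and dropping the literal admits a new
   solution of the clause (else drop the literal). *)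
Lemma reduced_witnesses (d : dnf) k l lit0 : reduced d ->
  (k < size d)%N -> (l < size (nth [::] d k))%N ->
  (exists u, clause_holds u (nth [::] d k)) /\
  (exists t, [/\ ~~ dnf_holds t d, clause_holds t (del_nth (nth [::] d k) l)
                & ~~ lit_holds t (nth lit0 (nth [::] d k) l)]).
Proof.
move=> [Hr1 Hr2] Hk Hl; set c := nth [::] d k in Hl *.
have dnfE v : dnf_holds v d = clause_holds v c || dnf_holds v (del_nth d k).
  exact: has_del_nth.
have clauseE v : clause_holds v c = lit_holds v (nth lit0 c l) && clause_holds v (del_nth c l).
  exact: all_del_nth.
split; apply: NNPP => Hno.
  have Hc v : clause_holds v c = false by apply/negbTE/negP => Hv; apply: Hno; exists v.
  by apply: (Hr1 k Hk) => v; rewrite dnfE Hc.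
apply: (Hr2 k l Hk Hl) => v; rewrite dnf_holds_del_lit // dnfE clauseE.
case Hd: (dnf_holds v (del_nth d k)); rewrite ?orbT // !orbF.
case Hc: (clause_holds v (del_nth c l)); rewrite ?andbF //.
case Hlit: (lit_holds v _) => //; case: Hno; exists v.
by rewrite dnfE clauseE Hlit Hc Hd.
Qed.

Lemma reduced_positive (G : structure) (i : sym G) (d : dnf) :
  suc_endos_preserve G -> dnf_defines (arity i) (relof i) d -> reduced d -> positive d.
Proof.
set n := arity i => HP [Hvars Hdef] Hred.
apply/allP => c Hc; apply/allP => -[[[ii jj] p] b] Hlit /=; apply/negPn/negP => /negbTE Eb.
subst b; set lit := (ii, jj, p, false) in Hlit.
have Hk : (index c d < size d)%N by rewrite index_mem.
have Ec : nth [::] d (index c d) = c by rewrite nth_index.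
have Hl : (index lit c < size (nth [::] d (index c d)))%N by rewrite Ec index_mem.
have [[u Hu] [t [Htd Htc' Htlit]]] := reduced_witnesses lit Hred Hk Hl.
rewrite Ec nth_index // in Hu Htc' Htlit.
(* Splitting [t] along [u] gives a tuple of the relation which the endomorphism [unsplit]
   sends to [t], a non-tuple. *)
have Htp : sucp p (t ii) (t jj) by move: Htlit; rewrite /lit /lit_holds; case: sucp.
have [F HF] := exists_fresh_rat [seq (t k).1 | k <- iota 0 n].
have HFt k : (k < n)%N -> (t k).1 != F.
  by move=> Hkn; apply: contraNneq HF => <-; apply: map_f; rewrite mem_iota.
have Hsplit := clause_holds_split_block HFt (allP Hvars c Hc) Hlit Hu Htc' Htp.
have Emap : map (unsplit jj t F \o split_block jj t u F) (iota 0 n) = mkseq t n.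
  by apply/eq_in_map => k; rewrite mem_iota add0n => /andP [_ Hkn]; exact: (unsplitK jj u HFt Hkn).
have /Hdef : relof i (mkseq t n).
  rewrite -Emap map_comp; apply: (HP _ (suc_endo_unsplit jj t F)).
  by apply/Hdef/hasP; exists c.
by apply/negP: Htd.
Qed.

Definition project_copies (x : QZ) : QZ := (0, x.2).

Lemma merges_project_copies : merges_copies project_copies.
Proof. by exists (0, 0), (1, 0); split => //; rewrite /same_copy /= => /eqP; rewrite eq_sym oner_eq0. Qed.

Lemma sucp_project_copies p x y : sucp p x y -> sucp p (project_copies x) (project_copies y).
Proof. by case/andP. Qed.

Lemma positive_project_endomorphism (G : structure) :
  (forall i : sym G, fo_definable (arity i) (relof i)) ->
  (forall (i : sym G) (d : dnf), dnf_defines (arity i) (relof i) d -> reduced d -> positive d) ->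
  endomorphism G project_copies.
Proof.
move=> Hfo Hpos i s Hs.
have [d0 /reduced_dnf_exists [d [[Hv Hdef] Hred]]] := local_dnf_definable (fo_definable_local (Hfo i)).
have Hsize : size s = arity i := relof_size Hs.
have /Hdef /hasP [c Hc Hcl] : relof i (mkseq (id \o nth (0, 0) s) (arity i)).
  by rewrite -map_mkseq_nth // map_id.
rewrite (map_mkseq_nth _ Hsize); apply/Hdef/hasP; exists c => //; apply/allP => -[[[a b] q] bb] Hl.
have /= Hbb := allP (allP (Hpos i d (conj Hv Hdef) Hred) c Hc) _ Hl; move: Hbb Hl => -> Hl.
have /eqP Hab := allP Hcl _ Hl; rewrite /lit_holds /=.
by rewrite (sucp_project_copies Hab).
Qed.

(** * Binary relations of infinite distance degree *)

Lemma pp_holds_endomorphism (G : structure) h (phi : ppf G) v :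
  endomorphism G h -> pp_holds v phi -> pp_holds (h \o v) phi.
Proof.
move=> Hh; elim: phi v => /=.
- by move=> i xs v H; rewrite map_comp; apply: Hh.
- by move=> i j v ->.
- by [].
- by move=> g IHg k IHk v [H1 H2]; split; [apply: IHg | apply: IHk].
- move=> x g IH v [a Ha]; exists (h a).
  have -> : upd (h \o v) x (h a) = h \o upd v x a.
    by apply: functional_extensionality => k; rewrite /upd /=; case: ifP.
  exact: IH.
Qed.

Definition val2 (x y : QZ) : nat -> QZ := fun k => if k == 0%N then x else y.

Lemma pp_definable2_endomorphism (G : structure) (R : QZ -> QZ -> Prop) h :
  pp_definable2 G R -> endomorphism G h -> forall x y, R x y -> R (h x) (h y).
Proof.
move=> [phi Hphi] Hh x y /(Hphi (val2 x y)) /(pp_holds_endomorphism Hh).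
exact: (proj2 (Hphi (h \o val2 x y))).
Qed.

Lemma suc_endo_QZsuc h : suc_endo h -> endomorphism QZsuc h.
Proof. by move=> Hh [] s [x [y [-> Hxy]]]; exists (h x), (h y); split => //; apply: Hh. Qed.

(* By locality, [R] cannot tell a pair far apart on one copy from a pair on two copies. *)
Lemma fo_definable2_far (R : QZ -> QZ -> Prop) : fo_definable2 R -> exists N,
  forall x y z, R x y -> same_copy x y -> (N < `|(y.2 - x.2)%R|)%N -> ~ same_copy x z -> R x z.
Proof.
move=> /fo_definable_local [N HN]; exists N => x y z Rxy Exy Hd /eqP Exz.
apply: (HN (val2 x y) (val2 x z)) Rxy => i j; rewrite !inE => Hi Hj p Hp.
case/orP: Hi => /eqP ->; case/orP: Hj => /eqP ->; rewrite /val2 /= ?sucpxx //.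
- by rewrite /sucp -Exy eqxx (negbTE Exz); apply/negbTE/eqP; lia.
- by rewrite /sucp -Exy eqxx [z.1 == _]eq_sym (negbTE Exz); apply/negbTE/eqP; lia.
Qed.

Lemma infinite_degree_trivial (G : structure) (R : QZ -> QZ -> Prop) :
  suc_endos_preserve G -> pp_definable2 G R -> fo_definable2 R -> infinite_distance_degree R -> trivial2 R.
Proof.
move=> HP Hpp /fo_definable2_far [N HN] Hinf; have [x [y [Rxy [Exy Hd]]]] := Hinf N.
pose z : QZ := (x.1 + 1, 0).
have Hxz : x.1 != z.1 by apply/eqP => /= E; lra.
have Rxz := HN x y z Rxy Exy Hd (elimN eqP Hxz).
exists (PTrue QZsuc) => v; split => // _.
pose h (w : QZ) := if w.1 == x.1 then ((v 0%N).1, w.2 - x.2 + (v 0%N).2)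
                   else ((v 1%N).1, w.2 - z.2 + (v 1%N).2).
have Hh : suc_endo h.
  move=> a b /andP [/eqP E1 /eqP E2]; rewrite /h -E1.
  by case: (a.1 == x.1); rewrite /sucp /= eqxx /= E2; apply/eqP; ring.
have := pp_definable2_endomorphism Hpp (HP h Hh) Rxz.
by rewrite /h eqxx eq_sym (negbTE Hxz) !subrr !add0r -!surjective_pairing.
Qed.

(** * A non-trivial relation from a non-merging structure *)

Section PPFormulas.
Variables (G : structure) (isuc : sym G).
Hypothesis Hisuc : forall s, relof isuc s <-> suc_rel s.

Lemma relof_isuc x y : relof isuc [:: x; y] <-> sucp 1 x y.
Proof. by rewrite Hisuc; split => [[a [b [[-> ->]]]]|H] //; exists x, y. Qed.

Fixpoint pp_sucn (k i j base : nat) : ppf G :=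
  if k is k'.+1 then PEx (base + k') (PAnd (pp_sucn k' i (base + k') base) (PRel isuc [:: base + k'; j]))
  else PEq G i j.

Lemma pp_sucn_sem k i j base v : (i < base)%N -> (j < base \/ base + k <= j)%N ->
  (pp_holds v (pp_sucn k i j base) <-> sucp k%:Z (v i) (v j)).
Proof.
elim: k j v => [|k IH] j v Hi Hj /=; first by rewrite sucp0; split => [->|/eqP].
have -> : k.+1%:Z = k%:Z + 1 by lia.
have [Hik Hjk] : i != base + k /\ j != base + k by rewrite !neq_ltn; lia.
have Hchain a : pp_holds (upd v (base + k) a) (pp_sucn k i (base + k) base) <-> sucp k (v i) a.
  by rewrite IH //; [rewrite /upd (negbTE Hik) eqxx | right].
have Hlast a : relof isuc [seq upd v (base + k) a x | x <- [:: base + k; j]] <-> sucp 1 a (v j).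
  by rewrite /= relof_isuc /upd eqxx (negbTE Hjk).
by rewrite sucpD1; split => [] [a]; rewrite ?Hchain ?Hlast => H; exists a; rewrite ?Hchain ?Hlast.
Qed.

Definition pp_sucp (p : int) i j base : ppf G :=
  if 0 <= p then pp_sucn (absz p) i j base else pp_sucn (absz p) j i base.

Lemma pp_sucp_sem p i j base v : (i < base)%N -> (j < base)%N ->
  (pp_holds v (pp_sucp p i j base) <-> sucp p (v i) (v j)).
Proof.
move=> Hi Hj; rewrite /pp_sucp; case: ifP => Hp.
- by rewrite pp_sucn_sem //; [have -> : (absz p)%:Z = p by lia | left].
- rewrite pp_sucn_sem //; last by left.
  by rewrite [sucp p _ _]sucpC; have -> : - p = (absz p)%:Z by lia.
Qed.

Fixpoint pp_exs (m base : nat) (phi : ppf G) : ppf G :=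
  if m is m'.+1 then PEx (base + m') (pp_exs m' base phi) else phi.

Lemma pp_exs_sem m base phi v :
  pp_holds v (pp_exs m base phi) <->
  exists w, (forall j, (j < base \/ base + m <= j)%N -> w j = v j) /\ pp_holds w phi.
Proof.
elim: m v => [|m IH] v /=.
  split=> [H|[w [Hw H]]]; first by exists v.
  by have -> : v = w by apply: functional_extensionality => j; rewrite Hw //; lia.
split=> [[a /IH [w [Hw H]]]|[w [Hw H]]].
  exists w; split => // j Hj; rewrite Hw; last by lia.
  by rewrite /upd ifN // neq_ltn; lia.
exists (w (base + m)); apply/IH; exists w; split => // j Hj.
by rewrite /upd; case: eqP => [->|Hne] //; apply: Hw; lia.
Qed.

Lemma pp_holds_all (phi : nat -> ppf G) ks v :
  pp_holds v (foldr (fun k f => PAnd (phi k) f) (PTrue G) ks) <->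
  (forall k, k \in ks -> pp_holds v (phi k)).
Proof.
elim: ks => [|k ks IH] /=; first by split.
rewrite IH; split => [[H1 H2] k'|H]; first by rewrite inE => /orP [/eqP ->|/H2].
by split => [|k' Hk']; apply: H; rewrite inE ?eqxx ?Hk' ?orbT.
Qed.

End PPFormulas.

Definition merge01 (x : QZ) : QZ := if x.1 == 1 then (0, x.2) else x.

Lemma suc_endo_merge01 : suc_endo merge01.
Proof.
move=> a b /andP [/eqP E1 /eqP E2]; rewrite /merge01 -E1.
by case: (a.1 == 1); rewrite /sucp /= ?E1 ?eqxx /= ?E2 ?eqxx.
Qed.

Lemma merges_merge01 : merges_copies merge01.
Proof. by exists (0, 0), (1, 0); split => //; move/eqP; rewrite eq_sym oner_eq0. Qed.

Lemma eq_in_mkseq (T : Type) (f g : nat -> T) n :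
  (forall k, (k < n)%N -> f k = g k) -> mkseq f n = mkseq g n.
Proof. by move=> H; apply/eq_in_map => k; rewrite mem_iota => /andP [_ /H]. Qed.

Section WitnessRelation.
Variables (G : structure) (i : sym G) (s : seq QZ) (N : nat).
Hypothesis HN : forall f g, sucp_agree_on N s f g -> relof i (map f s) -> relof i (map g s).
Hypothesis Hs : relof i s.
Hypothesis Hms : ~ relof i (map merge01 s).

Definition copies := [seq u.1 | u <- s].
Definition bound := (\sum_(u <- s) absz u.2)%N.
Definition gap := (bound + bound + N).+1.

(* Copy [0] gets slot [0] and the other copies of [s] distinct positive slots; copy [1] is the one
   to be moved. *)
Definition slot (q : rat) : nat := if q == 0 then 0%N else (index q copies).+1.
Definition offset (u : QZ) : int := if u.1 == 1 then u.2 else (gap * slot u.1)%N%:Z + u.2.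
Definition anchor (u : QZ) : nat := if u.1 == 1 then 1%N else 0%N.

(* [witness x y] holds iff [s] holds after laying its copy [1] out from [y] and all its other
   copies from [x]. *)
Definition place (z : nat -> QZ) (u : QZ) : QZ := ((z (anchor u)).1, (z (anchor u)).2 + offset u).
Definition witness (x y : QZ) : Prop := relof i (map (place (val2 x y)) s).

Definition slot_at (K : nat) (u : QZ) : nat := if u.1 == 1 then K else slot u.1.

Lemma place_spread K T : (forall u, (T u).2 = u.2) ->
  place (val2 (0, 0) (0, (gap * K)%N%:Z)) =1 spread bound N 0 (slot_at K) T.
Proof.
move=> HT u; rewrite /place /spread /anchor /offset /slot_at HT.
by case: (u.1 == 1) => /=; rewrite ?add0r.
Qed.

Lemma slot_eq q q' : q \in 0 :: copies -> q' \in 0 :: copies -> (slot q == slot q') = (q == q').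
Proof.
rewrite !inE /slot => Hq Hq'.
case: (eqVneq q 0) Hq => [->|nq] /= Hq; case: (eqVneq q' 0) Hq' => [->|nq'] /= Hq' //.
- by rewrite (negbTE nq).
- by rewrite eqSS (inj_in_eq (@index_inj _ 0 copies)).
Qed.

Lemma slot_le q : q \in copies -> (slot q <= size copies)%N.
Proof. by rewrite /slot; case: ifP => // _; rewrite index_mem. Qed.

Lemma bound_ge u : u \in s -> (absz u.2 <= bound)%N.
Proof. by move=> Hu; rewrite /bound (big_rem u Hu) leq_addr. Qed.

Lemma witness_far K : (size copies < K)%N -> witness (0, 0) (0, (gap * K)%N%:Z).
Proof.
move=> HK; rewrite /witness (eq_map (place_spread K (T := id) (fun=> erefl))).
move: Hs; rewrite -{1}(map_id s); apply: HN; apply: sucp_agree_on_sym.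
apply: sucp_agree_spread => [u /bound_ge //|u w Hu Hw].
have Hu1 : u.1 \in copies := map_f fst Hu; have Hw1 : w.1 \in copies := map_f fst Hw.
rewrite /slot_at; case E1: (u.1 == 1); case E2: (w.1 == 1).
- by rewrite (eqP E1) (eqP E2) !eqxx.
- by rewrite (eqP E1) [1 == _]eq_sym E2; apply/negbTE; rewrite neq_ltn (leq_ltn_trans (slot_le Hw1)) ?orbT.
- by rewrite (eqP E2) E1; apply/negbTE; rewrite neq_ltn (leq_ltn_trans (slot_le Hu1)) ?orbT.
- by rewrite slot_eq // inE ?Hu1 ?Hw1 orbT.
Qed.

Lemma not_witness_merged : ~ witness (0, 0) (0, 0).
Proof.
move=> HW; apply: Hms; move: HW.
rewrite /witness (_ : val2 (0, 0) (0, 0) = val2 (0, 0) (0, (gap * 0)%N%:Z)); last by rewrite muln0.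
rewrite (eq_map (place_spread 0 (T := merge01) _)) => [|u]; last by rewrite /merge01; case: ifP.
apply: HN; apply: sucp_agree_spread => [u /bound_ge|u w Hu Hw]; first by rewrite /merge01; case: ifP.
have slot_at0 x : slot_at 0 x = slot (merge01 x).1.
  by rewrite /slot_at /merge01 /slot; case: ifP => //= _; rewrite eqxx.
have merge01_copy x : x \in s -> (merge01 x).1 \in 0 :: copies.
  by move=> Hx; rewrite /merge01; case: ifP; rewrite inE ?eqxx ?(map_f fst Hx) ?orbT.
by rewrite !slot_at0 slot_eq ?merge01_copy.
Qed.

Lemma place_ext z z' : z 0%N = z' 0%N -> z 1%N = z' 1%N -> place z =1 place z'.
Proof. by move=> E0 E1 u; rewrite /place /anchor; case: ifP; rewrite ?E0 ?E1. Qed.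

Lemma place_val2 z : place (val2 (z 0%N) (z 1%N)) =1 place z.
Proof. exact: place_ext. Qed.

Lemma witness_local : local_rel 2 (fun t => witness (nth (0, 0) t 0) (nth (0, 0) t 1)).
Proof.
pose C := (\sum_(u <- s) absz (offset u))%N.
have HC u : u \in s -> (absz (offset u) <= C)%N by move=> Hu; rewrite /C (big_rem u Hu) leq_addr.
exists (N + C + C) => v w H; rewrite /witness /= !(eq_map (place_val2 _)).
apply: HN => u u' Hu Hu' p Hp; rewrite /place !sucp_shift; apply: H.
- by rewrite mem_iota /anchor; case: ifP.
- by rewrite mem_iota /anchor; case: ifP.
- by have := HC u Hu; have := HC u' Hu'; lia.
Qed.

Lemma witness_fo_definable : fo_definable2 witness.
Proof. exact: local_fo_definable witness_local. Qed.

Lemma gap_mul_ge K : (K <= gap * K)%N.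
Proof. by rewrite leq_pmull. Qed.

Lemma witness_infinite : infinite_distance_degree witness.
Proof.
move=> N0; exists (0, 0), (0, (gap * (size copies + N0).+1)%N%:Z).
split; first by apply: witness_far; lia.
by split => //=; have := gap_mul_ge (size copies + N0).+1; lia.
Qed.

Lemma witness_01 : witness (0, 0) (1, 0).
Proof.
have [NR HNR] := fo_definable2_far witness_fo_definable.
apply: (HNR _ (0, (gap * (size copies + NR).+1)%N%:Z)) => //.
- by apply: witness_far; lia.
- by rewrite /=; have := gap_mul_ge (size copies + NR).+1; lia.
Qed.

Lemma witness_nontrivial : nontrivial2 witness.
Proof.
split=> [|Htriv]; first exact: witness_fo_definable.
apply: not_witness_merged.
exact: (pp_definable2_endomorphism Htriv (suc_endo_QZsuc suc_endo_merge01) witness_01).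
Qed.

Lemma witness_pp_definable (isuc : sym G) :
  (forall t, relof isuc t <-> suc_rel t) -> pp_definable2 G witness.
Proof.
move=> Hisuc; set n := size s; pose V := nth (0, 0) s.
pose pin k := pp_sucp isuc (offset (V k)) (anchor (V k)) (2 + k) (2 + n).
exists (pp_exs n 2 (PAnd (PRel i (iota 2 n)) (foldr (fun k f => PAnd (pin k) f) (PTrue G) (iota 0 n)))).
move=> v; rewrite pp_exs_sem.
have pinE w k : (k < n)%N -> pp_holds w (pin k) <-> w (2 + k)%N = place w (V k).
  by move=> Hk; rewrite (pp_sucp_sem Hisuc) ?sucpP //; rewrite /anchor; case: ifP.
have mapE w : map w (iota 2 n) = mkseq (fun k => w (2 + k)%N) n by rewrite (iotaDl 2 0) -map_comp.
have placeE z : map (place z) s = mkseq (place z \o V) n by apply: map_mkseq_nth.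
rewrite /witness (eq_map (place_val2 v)) placeE.
split=> [HW|[w [Hw [/= HRel /pp_holds_all Hpins]]]].
  pose w j := if (2 <= j < 2 + n)%N then place v (V (j - 2)%N) else v j.
  have Ew j : (j < 2)%N -> w j = v j by move=> Hj; rewrite /w ifF //; apply/negbTE; lia.
  have Ewk k : (k < n)%N -> w (2 + k)%N = place v (V k) by move=> Hk; rewrite /w ifT ?addKn //; lia.
  exists w; split; first by move=> j Hj; rewrite /w ifF //; apply/negbTE; lia.
  split.
    by rewrite /= mapE (eq_in_mkseq (g := place v \o V)) // => k /Ewk.
  apply/pp_holds_all => k; rewrite mem_iota => /andP [_ Hk]; apply/pinE => //.
  by rewrite Ewk // (place_ext (z' := v)) ?Ew.
move: HRel; rewrite mapE (eq_in_mkseq (g := place v \o V)) // => k Hk.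
have /(pinE _ _ Hk) -> : pp_holds w (pin k) by apply: Hpins; rewrite mem_iota.
by rewrite (place_ext (z' := v)) ?Hw //; left.
Qed.

End WitnessRelation.

Lemma non_merging_witness (G : structure)
  (Hfo : forall i : sym G, fo_definable (arity i) (relof i))
  (Hsuc : exists i : sym G, forall s, relof i s <-> suc_rel s) :
  ~ (exists e, endomorphism G e /\ merges_copies e) ->
  exists R, pp_definable2 G R /\ nontrivial2 R /\ infinite_distance_degree R.
Proof.
move=> Hno; have [isuc Hisuc] := Hsuc.
have [i [s [Hs Hms]]] : exists (i : sym G) s, relof i s /\ ~ relof i (map merge01 s).
  apply: NNPP => H; apply: Hno; exists merge01; split; last exact: merges_merge01.
  by move=> i s Hs; apply: NNPP => Hm; apply: H; exists i, s.
have [N HN] := relof_local Hfo i.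
exists (witness i s N); split; first exact (witness_pp_definable i s N Hisuc).
by split; [exact (witness_nontrivial (HN s) Hs Hms) | exact (witness_infinite (HN s) Hs)].
Qed.

Theorem mainTheorem16 (G : structure)
  (Hfo : forall i : sym G, fo_definable (arity i) (relof i))
  (Hsuc : exists i : sym G, forall s, relof i s <-> suc_rel s) :
  ((forall (i : sym G) (d : dnf),
      dnf_defines (arity i) (relof i) d -> reduced d -> positive d) <->
   (exists e : QZ -> QZ, endomorphism G e /\
      exists a b : QZ, ~ same_copy a b /\ same_copy (e a) (e b))) /\
  ((exists e : QZ -> QZ, endomorphism G e /\
      exists a b : QZ, ~ same_copy a b /\ same_copy (e a) (e b)) <->
   ~ (exists R : QZ -> QZ -> Prop,
        pp_definable2 G R /\ nontrivial2 R /\ infinite_distance_degree R)).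
Proof.
split; split.
- move=> Hpos; exists project_copies.
  by split; [apply: positive_project_endomorphism | apply: merges_project_copies].
- move=> [e [He Hm]] i d; apply: reduced_positive.
  exact (merging_endo_suc_endos Hfo Hsuc He Hm).
- move=> [e [He Hm]] [R [Hpp [[Hfo2 Hnt] Hinf]]]; apply: Hnt.
  exact: infinite_degree_trivial (merging_endo_suc_endos Hfo Hsuc He Hm) Hpp Hfo2 Hinf.
- by move=> HnoR; apply: NNPP => Hno; apply: HnoR; apply: non_merging_witness.
Qed.
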